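(* Let $L$ be a finite distributive lattice such that $\widetilde L$ is a regular mosaic, and let $F:\bigcup_{x\in c(L)}\mathcal D_x(\mathcal J(L))\to\mathbb R$. Define $\widetilde F:\widetilde L\to\mathbb R$ by $\widetilde F(y,z):=F(1_{\eta(y)}-1_{\eta(z)})$, and let $\widetilde m:\widetilde L\to\mathbb R$ be its Möbius transform, i.e. the unique function with $\widetilde F(x,y)=\sum_{(z,t)\in\widetilde L,\,(z,t)\le(x,y)}\widetilde m(z,t)$ for all $(x,y)\in\widetilde L$. Then for every $f\in\widetilde{|L|}$, $$\overline F(f)=\sum_{(s,t)\in\widetilde L}\widetilde m(s,t)\Big[\min_{j\in\eta(s)}f^+(j)\ \wedge\ \min_{j\in\eta(t)}f^-(j)\Big],$$ where $f^+:=\max(f,0)$, $f^-:=\max(-f,0)$, $\wedge$ denotes minimum, and a minimum over the empty set is $1$.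
   Context: $L$ has least element $\bot$ and greatest element $\top$; $\mathcal J(L)$ is its set of join-irreducible elements (elements covering exactly one element) with the induced order; $\eta(y):=\{j\in\mathcal J(L): j\le y\}$. $c(L)$ is the set of complemented elements ($x$ with some $x'$, unique, such that $x\wedge x'=\bot$, $x\vee x'=\top$). $\widetilde L:=\{(x,y)\in L^2: x\wedge y=\bot\}$ with the product order. $\widetilde L$ is a regular mosaic if every connected component of the Hasse diagram of $\mathcal J(L)$ has a least element. A map $g$ on $\mathcal J(L)$ is nonincreasing if $j\le j'$ implies $g(j)\ge g(j')$. For $x\in c(L)$: $\mathcal D_x(\mathcal J(L))$ is the set of maps $\xi:\mathcal J(L)\to\{-1,0,1\}$ with $|\xi|$ nonincreasing, $\xi\ge0$ on $\eta(x)$, $\xi\le0$ on $\eta(x')$; $\mathcal C_x(\mathcal J(L))$ is the set of maps $f:\mathcal J(L)\to[-1,1]$ with $|f|$ nonincreasing, $f\ge0$ on $\eta(x)$, $f\le0$ on $\eta(x')$; and $\widetilde{|L|}:=\bigcup_{x\in c(L)}\mathcal C_x(\mathcal J(L))$. For $f\in\widetilde{|L|}$, $|f|$ can be written uniquely as $|f|=\sum_{i=0}^p\alpha_i1_{X_i}$ with $X_0\subsetneq\cdots\subsetneq X_p$ downsets of $\mathcal J(L)$, $\alpha_i>0$, $\sum_i\alpha_i=1$; the (bipolar) natural extension is $\overline F(f):=\sum_{i=0}^p\alpha_iF(1_{X_i\cap\eta(x)}-1_{X_i\cap\eta(x')})$, where $x\in c(L)$ is any element with $f\in\mathcal C_x(\mathcal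 J(L))$ (the value does not depend on this choice). *)

From HB Require Import structures.
From mathcomp Require Import all_boot all_order all_algebra.
Set Implicit Arguments. Unset Strict Implicit. Unset Printing Implicit Defensive.
Import Order.TTheory GRing.Theory Num.Theory.

Section Defs.
Context {d : Order.disp_t} (L : finTBDistrLatticeType d).
Local Open Scope order_scope.

Definition covers (x y : L) : bool :=
  (y < x) && [forall z : L, ~~ ((y < z) && (z < x))].

Definition is_ji (j : L) : bool := #|[set y : L | covers j y]| == 1%N.

(* J(L) with the induced order (compare via val) *)
Definition JI : finType := {j : L | is_ji j}.

Definition etaJ (y : L) : {set JI} := [set j : JI | val j <= y].
Arguments etaJ : clear implicits.

Definition jcover (a b : JI) : bool :=
  (val a < val b) && [forall c : JI, ~~ ((val a < val c) && (val c < val b))].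

Definition hasse : rel JI := fun a b => jcover a b || jcover b a.

(* Ltilde is a regular mosaic: every connected component of the Hasse
   diagram of J(L) has a least element *)
Definition regular_mosaic : Prop :=
  forall a : JI, exists m : JI,
    connect hasse m a /\ forall b : JI, connect hasse a b -> val m <= val b.

Definition is_compl (x x' : L) : Prop := x `&` x' = \bot /\ x `|` x' = \top.
End Defs.
Arguments etaJ {d L} y.
Arguments is_compl {d L} x x'.

Section Real.
Context {d : Order.disp_t} (L : finTBDistrLatticeType d) (R : realFieldType).
Local Open Scope ring_scope.

Definition sind (A B : {set JI L}) : {ffun JI L -> R} :=
  [ffun j => (j \in A)%:R - (j \in B)%:R].

Definition in_Cx (x x' : L) (f : {ffun JI L -> R}) : Prop :=
  (forall j, -1 <= f j <= 1) /\
  (forall j j' : JI L, (val j <= val j')%O -> `|f j'| <= `|f j|) /\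
  (forall j, j \in etaJ x -> 0 <= f j) /\
  (forall j, j \in etaJ x' -> f j <= 0).

Definition level_decomp (f : {ffun JI L -> R}) (p : nat)
    (X : 'I_p.+1 -> {set JI L}) (al : 'I_p.+1 -> R) : Prop :=
  (forall i (a b : JI L), (val a <= val b)%O -> b \in X i -> a \in X i) /\
  (forall i k : 'I_p.+1, (i < k)%N -> X i \proper X k) /\
  (forall i, 0 < al i) /\
  (\sum_(i < p.+1) al i = 1) /\
  (forall j, `|f j| = \sum_(i < p.+1) al i * (j \in X i)%:R).

(* natural (bipolar) extension value computed from a decomposition and x *)
Definition nat_ext_val (F : {ffun JI L -> R} -> R) (x x' : L) (p : nat)
    (X : 'I_p.+1 -> {set JI L}) (al : 'I_p.+1 -> R) : R :=
  \sum_(i < p.+1) al i * F (sind (X i :&: etaJ x) (X i :&: etaJ x')).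

Definition Ftilde (F : {ffun JI L -> R} -> R) (y z : L) : R :=
  F (sind (etaJ y) (etaJ z)).

Definition is_moebius (F : {ffun JI L -> R} -> R) (m : L -> L -> R) : Prop :=
  forall x y : L, (x `&` y == \bot)%O ->
    Ftilde F x y =
      \sum_(z : L) \sum_(t : L | [&& (z `&` t == \bot)%O, (z <= x)%O & (t <= y)%O])
         m z t.

Definition minJ (A : {set JI L}) (g : JI L -> R) : R :=
  \big[Num.min/1]_(j in A) g j.

Definition fplus (f : {ffun JI L -> R}) (j : JI L) : R := Num.max (f j) 0.
Definition fminus (f : {ffun JI L -> R}) (j : JI L) : R := Num.max (- f j) 0.
End Real.

From HB Require Import structures.
From mathcomp Require Import all_boot all_order all_algebra.
Set Implicit Arguments. Unset Strict Implicit. Unset Printing Implicit Defensive.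
Import Order.TTheory GRing.Theory Num.Theory.

(* In a finite distributive
   lattice a join-irreducible j is join-prime (j <= a `|` b implies j <= a
   or j <= b), and every element is the join of the join-irreducibles below
   it; hence s <= y iff eta(s) \subset eta(y), and every downset D of J(L)
   is eta of its own join.  Consequently each level X_i of the decomposition
   of |f|, cut by eta(x) and eta(x'), is (eta(y_i), eta(z_i)) for a pair
   (y_i, z_i) of Ltilde, and the Moebius transform expands F there.

   For a chain of levels X_i with weights al_i
   representing |f|, the total weight of the levels containing a set C of
   join-irreducibles is the minimum of |f| over C (an empty minimum being 1).
   Splitting C = eta(s) :|: eta(t) according to the sign of f turns this into
   min (min_{eta s} f^+) (min_{eta t} f^-).  Exchanging the finite sums then
   gives the theorem. *)

Section Birkhoff.
Context {d : Order.disp_t} (L : finTBDistrLatticeType d).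
Local Open Scope order_scope.

(* The principal downset of w; its size is a well-founded measure on L. *)
Definition dn (w : L) : {set L} := [set z : L | z <= w].

Lemma dn_proper (u w : L) : u < w -> (#|dn u| < #|dn w|)%N.
Proof.
move=> uw; apply/proper_card/properP; split.
  by apply/subsetP => z; rewrite !inE => zu; exact: le_trans zu (ltW uw).
by exists w; rewrite !inE ?lexx // lt_geF.
Qed.

Lemma lower_cover (u j : L) : u < j -> exists2 w, u <= w & covers j w.
Proof.
move=> uj; have P0 : (u <= u) && (u < j) by rewrite lexx uj.
case: (@arg_maxnP L u (fun w => (u <= w) && (w < j)) (fun w => #|dn w|) P0) => w /andP[uw wj] wmax.
exists w; rewrite // /covers wj; apply/forallP => z; apply/negP => /andP[wz zj].
have /= := wmax z; rewrite (le_trans uw (ltW wz)) zj => /(_ isT).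
by rewrite leqNgt dn_proper.
Qed.

(* Join-irreducibles are nonzero: \bot covers nothing. *)
Lemma ji_gt0 (j : L) : is_ji j -> \bot < j.
Proof.
rewrite lt0x; apply: contraTneq => ->; rewrite /is_ji.
suff -> : [set y : L | covers \bot y] = set0 by rewrite cards0.
by apply/setP => y; rewrite !inE /covers ltx0.
Qed.

Lemma ji_prime (j a b : L) : is_ji j -> j <= a `|` b -> j <= a \/ j <= b.
Proof.
move=> /eqP/mem_card1[c cE] jab.
(* c is the unique lower cover of j, so it dominates everything below j. *)
have below (u : L) : u < j -> u <= c.
  move=> /lower_cover[w uw]; rewrite -inE cE => /eqP <-; exact: uw.
have ej : j = (j `&` a) `|` (j `&` b) by rewrite -meetUr; apply/esym/meet_idPl.
have [ja|nja] := boolP (j <= a); first by left.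
have [jb|njb] := boolP (j <= b); first by right.
have lt_meet (v : L) : ~~ (j <= v) -> j `&` v < j.
  by move=> njv; rewrite lt_neqAle leIl andbT; apply: contraNneq njv => <-; exact: leIr.
have cj : c < j by have := cE c; rewrite !inE eqxx => /andP[].
suff : j <= c by rewrite lt_geF.
by rewrite {1}ej leUx !below ?lt_meet.
Qed.

Lemma ji_prime_big (I : eqType) (r : seq I) (P : pred I) (G : I -> L) (j : L) :
  is_ji j -> j <= \join_(k <- r | P k) G k ->
  exists k, [/\ k \in r, P k & j <= G k].
Proof.
move=> hj; elim: r => [|k r IH].
  by rewrite big_nil lex0 => /eqP ej; move: (ji_gt0 hj); rewrite ej ltxx.
have shift : (exists k, [/\ k \in r, P k & j <= G k]) ->
    exists k', [/\ k' \in k :: r, P k' & j <= G k'].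
  by case=> k' [k'r Pk' jk']; exists k'; rewrite inE k'r orbT.
rewrite big_cons; case: ifP => Pk; last by move/IH/shift.
by case/(ji_prime hj) => [jk|/IH/shift //]; exists k; rewrite inE eqxx.
Qed.

(* An element that is neither \bot nor join-irreducible is the join of two
   strictly smaller elements (two distinct lower covers). *)
Lemma join_of_lower_covers (s : L) :
  \bot < s -> ~~ is_ji s -> exists c c', [/\ c < s, c' < s & c `|` c' = s].
Proof.
move=> /lower_cover[c _ cov_c] nji.
have cs : c < s by case/andP: cov_c.
have /subsetPn[c' ] : ~~ ([set y | covers s y] \subset [set c]).
  apply: contra nji => sub; rewrite /is_ji (_ : [set y | covers s y] = [set c]) ?cards1 //.
  by apply/eqP; rewrite eqEsubset sub sub1set inE.
rewrite !inE => cov_c' c'c.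
have c's : c' < s by case/andP: cov_c'.
have nc'c : ~~ (c' <= c).
  apply/negP => le_c'c; case/andP: cov_c' => _ /forallP/(_ c).
  by rewrite cs andbT lt_neqAle le_c'c andbT c'c.
have lt_c : c < c `|` c'.
  by rewrite lt_neqAle leUl andbT; apply: contraNneq nc'c => ->; exact: leUr.
exists c, c'; split=> //; apply/eqP; rewrite eq_le leUx (ltW cs) (ltW c's) /=.
case/andP: cov_c => _ /forallP/(_ (c `|` c')).
by rewrite lt_c /= lt_neqAle leUx (ltW cs) (ltW c's) !andbT negbK => /eqP ->.
Qed.

Lemma eta_le (s y : L) :
  (forall j : JI L, val j <= s -> val j <= y) -> s <= y.
Proof.
have [n] := ubnP #|dn s|; elim: n s => // n IH s lt_sn etaSY.
have IHlt (c : L) : c < s -> c <= y.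
  move=> cs; apply: IH => [|j jc]; first exact: leq_trans (dn_proper cs) lt_sn.
  by apply: etaSY; exact: le_trans jc (ltW cs).
have [s0|s_gt0] := eqVneq s \bot; first by rewrite s0 le0x.
have [sji|nsji] := boolP (is_ji s); first exact: (etaSY (exist _ s sji)).
rewrite -lt0x in s_gt0; have [c [c' [cs c's <-]]] := join_of_lower_covers s_gt0 nsji.
by rewrite leUx !IHlt.
Qed.

Lemma le_etaE (s w : L) : (s <= w) = (etaJ s \subset etaJ w).
Proof.
apply/idP/subsetP => [sw j|sub]; first by rewrite !inE => js; exact: le_trans sw.
by apply: eta_le => j js; have := sub j; rewrite !inE => /(_ js).
Qed.

Definition downset (A : {set JI L}) : Prop :=
  forall a b : JI L, val a <= val b -> b \in A -> a \in A.

Lemma downsetI_eta (A : {set JI L}) (w : L) : downset A -> downset (A :&: etaJ w).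
Proof.
move=> downA a b ab; rewrite !inE => /andP[bA bw].
by rewrite (downA a b ab bA) (le_trans ab bw).
Qed.

Lemma etaJ_join (A : {set JI L}) :
  downset A -> etaJ (\join_(k in A) val k) = A.
Proof.
move=> downA; apply/setP => j; rewrite inE; apply/idP/idP => [|jA].
  by case/(ji_prime_big (valP j)) => k [_ kA jk]; exact: downA jk kA.
by rewrite (bigD1 j) //= leUl.
Qed.

Lemma etaJ_compl_cover (x x' : L) (j : JI L) :
  is_compl x x' -> (j \in etaJ x) || (j \in etaJ x').
Proof.
case=> _ xUx'; rewrite !inE.
have : val j <= x `|` x' by rewrite xUx' lex1.
by case/(ji_prime (valP j)) => ->; rewrite ?orbT.
Qed.
End Birkhoff.

Section MinOverSets.
Context {d : Order.disp_t} (L : finTBDistrLatticeType d) (R : realFieldType).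
Local Open Scope ring_scope.
Implicit Types (A B : {set JI L}) (g : JI L -> R).

Lemma minJ_le1 A g : minJ A g <= 1.
Proof. by apply: (big_rec (fun v => v <= 1)) => // i v _ v1; rewrite ge_min v1 orbT. Qed.

Lemma minJ_le A g j : j \in A -> minJ A g <= g j.
Proof. by move=> jA; rewrite /minJ (bigD1 j) //= ge_min lexx. Qed.

Lemma le_minJP (a : R) A g :
  reflect (a <= 1 /\ forall j, j \in A -> a <= g j) (a <= minJ A g).
Proof.
apply: (iffP idP) => [le_a|[a1 aA]].
  by split=> [|j jA]; apply: le_trans le_a _; [exact: minJ_le1 | exact: minJ_le].
by apply: (big_ind (fun v => a <= v)) => // u v au av; rewrite le_min au av.
Qed.

Lemma minJ_ge0 A g : (forall j, 0 <= g j) -> 0 <= minJ A g.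
Proof. by move=> g_ge0; apply/le_minJP; split. Qed.

Lemma minJ_eq0 A g j :
  (forall j, 0 <= g j) -> j \in A -> g j = 0 -> minJ A g = 0.
Proof. by move=> g_ge0 jA gj0; apply: le_anti; rewrite minJ_ge0 // -gj0 minJ_le. Qed.

Lemma minJU A B g : minJ (A :|: B) g = Num.min (minJ A g) (minJ B g).
Proof.
have sub_le (C : {set JI L}) : C \subset A :|: B -> minJ (A :|: B) g <= minJ C g.
  move=> /subsetP CS; apply/le_minJP; split=> [|j jC]; first exact: minJ_le1.
  exact/minJ_le/CS.
apply: le_anti; rewrite le_min !sub_le ?subsetUl ?subsetUr //=.
apply/le_minJP; split=> [|j]; first by rewrite ge_min minJ_le1.
by rewrite inE ge_min => /orP[jA|jB]; [rewrite (minJ_le _ jA) | rewrite (minJ_le _ jB) orbT].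
Qed.
End MinOverSets.

Lemma proper_chain_mono (T : finType) (p : nat) (X : 'I_p.+1 -> {set T}) :
  (forall i k : 'I_p.+1, (i < k)%N -> X i \proper X k) ->
  forall i k : 'I_p.+1, (i <= k)%N -> X i \subset X k.
Proof.
move=> X_chain i k; rewrite leq_eqVlt => /orP[/eqP/val_inj -> //|lt_ik].
exact: proper_sub (X_chain _ _ lt_ik).
Qed.

Section LayerCake.
Context {d : Order.disp_t} (L : finTBDistrLatticeType d) (R : realFieldType).
Local Open Scope ring_scope.

Variables (p : nat) (X : 'I_p.+1 -> {set JI L}) (al : 'I_p.+1 -> R).
Variable h : JI L -> R.
Hypothesis X_mono : forall i k : 'I_p.+1, (i <= k)%N -> X i \subset X k.
Hypothesis al_ge0 : forall i, 0 <= al i.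
Hypothesis al_sum1 : \sum_(i < p.+1) al i = 1.
Hypothesis h_levels : forall j, h j = \sum_(i < p.+1) al i * (j \in X i)%:R.

Lemma ler_weighted (b b' : 'I_p.+1 -> bool) :
  (forall i, b i -> b' i) ->
  \sum_(i < p.+1) al i * (b i)%:R <= \sum_(i < p.+1) al i * (b' i)%:R.
Proof.
move=> bb'; apply: ler_sum => i _; apply: ler_wpM2l; first exact: al_ge0.
by rewrite ler_nat; case: (b i) (bb' i) => // ->.
Qed.

Lemma layer_cake (C : {set JI L}) :
  \sum_(i < p.+1) al i * (C \subset X i)%:R = minJ C h.
Proof.
apply: le_anti; apply/andP; split.
  apply/le_minJP; split=> [|j jC].
    apply: le_trans (ler_weighted (b' := fun=> true) _) _ => //.
    by under eq_bigr do rewrite mulr1; rewrite al_sum1.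
  by rewrite h_levels; apply: ler_weighted => i /subsetP; apply.
case: (pickP (fun i => ~~ (C \subset X i))) => [i0 Ci0|allC]; last first.
  rewrite (eq_bigr al) ?al_sum1 ?minJ_le1 // => i _.
  by move: (allC i) => /= /negbFE ->; rewrite mulr1.
case: (@arg_maxnP _ i0 (fun i => ~~ (C \subset X i)) val Ci0) => im /subsetPn[j jC jXm] im_max.
suff -> : \sum_(i < p.+1) al i * (C \subset X i)%:R = h j by rewrite minJ_le.
rewrite h_levels; apply: eq_bigr => i _; suff -> : (C \subset X i) = (j \in X i) by [].
case: (leqP i im) => [le_i_im|lt_im_i].
  have jXi : j \notin X i by apply: contra jXm; exact: (subsetP (X_mono le_i_im)).
  by rewrite (negbTE jXi); apply: negbTE; apply: contra jXi => /subsetP; apply.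
have CXi : C \subset X i by apply: contraLR lt_im_i => /im_max; rewrite -leqNgt.
by rewrite CXi (subsetP CXi).
Qed.
End LayerCake.

Section SignedLayerCake.
Context {d : Order.disp_t} (L : finTBDistrLatticeType d) (R : realFieldType).
Local Open Scope ring_scope.

Lemma fplus_ge0 (f : {ffun JI L -> R}) j : 0 <= fplus f j.
Proof. by rewrite /fplus le_max lexx orbT. Qed.

Lemma fminus_ge0 (f : {ffun JI L -> R}) j : 0 <= fminus f j.
Proof. by rewrite /fminus le_max lexx orbT. Qed.

Variables (f : {ffun JI L -> R}) (E E' : {set JI L}).
Hypothesis E_cover : forall j, (j \in E) || (j \in E').
Hypothesis f_ge0 : forall j, j \in E -> 0 <= f j.
Hypothesis f_le0 : forall j, j \in E' -> f j <= 0.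
Variables (p : nat) (X : 'I_p.+1 -> {set JI L}) (al : 'I_p.+1 -> R).
Hypothesis X_mono : forall i k : 'I_p.+1, (i <= k)%N -> X i \subset X k.
Hypothesis al_ge0 : forall i, 0 <= al i.
Hypothesis al_sum1 : \sum_(i < p.+1) al i = 1.
Hypothesis f_levels : forall j, `|f j| = \sum_(i < p.+1) al i * (j \in X i)%:R.

(* Both sides vanish as soon as some j in A lies outside E (or some j in B
   outside E'); otherwise f^+ = |f| on A, f^- = |f| on B, and the layer cake
   applies to A :|: B. *)
Lemma signed_layer_cake (A B : {set JI L}) :
  Num.min (minJ A (fplus f)) (minJ B (fminus f)) =
  \sum_(i < p.+1) al i * ((A \subset X i :&: E) && (B \subset X i :&: E'))%:R.
Proof.
have [AE|/subsetPn[j jA jE]] := boolP (A \subset E); last first.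
  have fj0 : fplus f j = 0.
    by rewrite /fplus max_r // f_le0 //; move: (E_cover j); rewrite (negbTE jE).
  rewrite (minJ_eq0 (fplus_ge0 f) jA fj0) min_l; last exact/minJ_ge0/fminus_ge0.
  rewrite big1 // => i _; suff /negbTE -> : ~~ (A \subset X i :&: E) by rewrite mulr0.
  by apply: contra jE => /subsetP/(_ j jA); rewrite inE => /andP[].
have [BE'|/subsetPn[k kB kE']] := boolP (B \subset E'); last first.
  have fk0 : fminus f k = 0.
    rewrite /fminus max_r // oppr_le0 f_ge0 //.
    by move: (E_cover k); rewrite (negbTE kE') orbF.
  rewrite (minJ_eq0 (fminus_ge0 f) kB fk0) min_r; last exact/minJ_ge0/fplus_ge0.
  rewrite big1 // => i _; suff /negbTE -> : ~~ (B \subset X i :&: E') by rewrite andbF mulr0.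
  by apply: contra kE' => /subsetP/(_ k kB); rewrite inE => /andP[].
have fplusA : {in A, fplus f =1 fun j => `|f j|}.
  by move=> j /(subsetP AE)/f_ge0 fj; rewrite /fplus max_l // ger0_norm.
have fminusB : {in B, fminus f =1 fun j => `|f j|}.
  by move=> j /(subsetP BE')/f_le0 fj; rewrite /fminus max_l ?ler0_norm // oppr_ge0.
rewrite /minJ (eq_bigr _ fplusA) (eq_bigr _ fminusB) -minJU.
rewrite -(layer_cake X_mono al_ge0 al_sum1 f_levels); apply: eq_bigr => i _.
by rewrite !subsetI AE BE' !andbT subUset.
Qed.
End SignedLayerCake.

Section MoebiusExpansion.
Context {d : Order.disp_t} (L : finTBDistrLatticeType d) (R : realFieldType).
Local Open Scope ring_scope.

Lemma moebius_expand (F : {ffun JI L -> R} -> R) (m : L -> L -> R) (y z : L) :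
  is_moebius F m -> (y `&` z == \bot)%O ->
  Ftilde F y z = \sum_(s : L) \sum_(t : L | (s `&` t == \bot)%O)
                   m s t * ((s <= y)%O && (t <= z)%O)%:R.
Proof.
move=> moeb yz; rewrite (moeb _ _ yz); apply: eq_bigr => s _.
rewrite big_mkcondr /=; apply: eq_bigr => t _.
by case: ifP; rewrite ?mulr1 ?mulr0.
Qed.
End MoebiusExpansion.

Local Open Scope ring_scope.

Theorem mainTheorem9 (d : Order.disp_t) (L : finTBDistrLatticeType d)
    (R : realFieldType) (F : {ffun JI L -> R} -> R) (m : L -> L -> R) :
  regular_mosaic L ->
  is_moebius F m ->
  forall (f : {ffun JI L -> R}) (x x' : L),
    is_compl x x' -> in_Cx x x' f ->
  forall (p : nat) (X : 'I_p.+1 -> {set JI L}) (al : 'I_p.+1 -> R),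
    level_decomp f X al ->
    nat_ext_val F x x' X al =
      \sum_(s : L) \sum_(t : L | (s `&` t == \bot)%O)
         m s t * Num.min (minJ (etaJ s) (fplus f)) (minJ (etaJ t) (fminus f)).
Proof.
move=> _ moeb f x x' xx' [_ [_ [f_ge0 f_le0]]] p X al [X_down [X_chain [al_gt0 [al_sum1 f_levels]]]].
(* The i-th level, cut by eta(x) and eta(x'), is (eta(y i), eta(z i)). *)
pose y i := (\join_(k in X i :&: etaJ x) val k)%O.
pose z i := (\join_(k in X i :&: etaJ x') val k)%O.
have ey i : etaJ (y i) = X i :&: etaJ x by apply/etaJ_join/downsetI_eta/X_down.
have ez i : etaJ (z i) = X i :&: etaJ x' by apply/etaJ_join/downsetI_eta/X_down.
have yz_bot i : (y i `&` z i == \bot)%O.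
  have yx : (y i <= x)%O by rewrite le_etaE ey subsetIr.
  have zx' : (z i <= x')%O by rewrite le_etaE ez subsetIr.
  by case: xx' => xIx' _; rewrite -lex0 -xIx' leI2.
have weight s t : Num.min (minJ (etaJ s) (fplus f)) (minJ (etaJ t) (fminus f)) =
    \sum_(i < p.+1) al i * ((s <= y i)%O && (t <= z i)%O)%:R.
  have al_ge0 i : 0 <= al i by exact: ltW.
  rewrite (signed_layer_cake (fun j => etaJ_compl_cover j xx') f_ge0 f_le0
             (proper_chain_mono X_chain) al_ge0 al_sum1 f_levels).
  by apply: eq_bigr => i _; rewrite !le_etaE ey ez.
rewrite /nat_ext_val; under eq_bigr => i _ do
  rewrite -ey -ez -/(Ftilde F (y i) (z i)) (moebius_expand moeb (yz_bot i)) mulr_sumr.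
rewrite exchange_big /=; apply: eq_bigr => s _.
under eq_bigr do rewrite mulr_sumr.
rewrite exchange_big /=; apply: eq_bigr => t _.
by rewrite weight mulr_sumr; apply: eq_bigr => i _; rewrite mulrCA.
Qed.
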